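(* Let $M$ be a finite regular cell complex with cell weights $w_\sigma>0$. For every function $f$ on $M$ (i.e. combinatorial $0$-form), $$\int_M\Delta f=0.$$
   Context: $C_*(M)$ is the real cellular chain complex with boundary $\partial$, cells oriented, and inner product $\langle\sigma,\sigma'\rangle=\delta_{\sigma,\sigma'}w_\sigma$. A combinatorial differential $d$-form is a linear map $\omega:C_*(M)\to C_*(M)$ with $\omega(C_p)\subset C_{p-d}$ such that $\omega(\alpha)$ is a combination of $(p-d)$-dimensional faces of each $p$-cell $\alpha$; $\Omega^d(M)$ is their space. A function $f$ is a $0$-form, $f(\sigma)=f_\sigma\sigma$, and we write $f(\sigma)$ for $f_\sigma$. The differential is $d\omega=\partial\circ\omega-(-1)^d\omega\circ\partial$; $\Omega^*(M)$ carries the inner product $\langle u,v\rangle=\sum_\sigma\frac1{w_\sigma}\langle u(\sigma),v(\sigma)\rangle$, $d^*$ is the adjoint of $d$, and $\Delta=dd^*+d^*d$. Thus $\Delta f$ is again a $0$-form, i.e. a function. For a function $h$, $\int_M h=\sum_\sigma h(\sigma)$ over all cells of $M$. *)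

From HB Require Import structures.
From mathcomp Require Import all_boot all_order all_algebra.
From mathcomp Require Import reals.
Set Implicit Arguments. Unset Strict Implicit. Unset Printing Implicit Defensive.
Import Order.TTheory GRing.Theory Num.Theory.
Local Open Scope ring_scope.

(* A finite (combinatorial) weighted cell complex M with real coefficients.
   - cell      : the finite set of cells
   - cdim s    : the dimension of the cell s
   - face t s  : t is a face of s (reflexive: every cell is a face of itself)
   - inc s t   : the incidence number [s : t], so that the cellular boundary
                 is  d s = \sum_t inc s t * t
   - weight s  : the weight w_s of the cell s *)
Record cell_complex (R : realType) := CellComplex {
  cell :> finType;
  cdim : cell -> nat;
  face : rel cell;
  inc : cell -> cell -> R;
  weight : cell -> R
}.

Arguments cdim {R} c _.
Arguments face {R} c _ _.
Arguments inc {R} c _ _.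
Arguments weight {R} c _.

Section Defs.
Variables (R : realType) (M : cell_complex R).

Definition regular_cell_complex : Prop :=
  (forall s, face M s s) /\
  (forall s t, face M s t -> face M t s -> s = t) /\
  (forall r s t, face M r s -> face M s t -> face M r t) /\
  (forall s t, face M t s -> t != s -> (cdim M t < cdim M s)%N) /\
  (forall s t, (inc M s t != 0) = (face M t s && ((cdim M t).+1 == cdim M s)%N)) /\
  (forall s t, inc M s t != 0 -> inc M s t = 1 \/ inc M s t = -1) /\
      (forall s r, \sum_(t : M) inc M s t * inc M t r = 0).

Definition positive_weights : Prop := forall s : M, 0 < weight M s.

Definition chain := M -> R.

Definition chain_inner (c c' : chain) : R :=
  \sum_(s : M) c s * c' s * weight M s.

(* A linear map C_*(M) -> C_*(M) is represented by its matrix in the cell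
   basis:  om(a) = \sum_b om a b * b. *)
Definition cform := M -> M -> R.

Definition form_at (om : cform) (a : M) : chain := fun b => om a b.

(* composition of linear maps:  (om1 \o om2)(a) = om1 (om2 a) *)
Definition fcomp (om1 om2 : cform) : cform :=
  fun a c => \sum_(b : M) om2 a b * om1 b c.

Definition bd : cform := fun a b => inc M a b.

Definition is_dform (d : nat) (om : cform) : Prop :=
  forall a b, om a b != 0 -> face M b a && (cdim M b + d == cdim M a)%N.

Definition hom_comp (d : nat) (om : cform) : cform :=
  fun a b => if (cdim M b + d == cdim M a)%N then om a b else 0.

Definition maxdim : nat := \max_(s : M) cdim M s.

Definition in_Omega (om : cform) : Prop :=
  (forall d, is_dform d (hom_comp d om)) /\
  om = (fun a b => \sum_(d < maxdim.+1) hom_comp d om a b).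

Definition dhom (d : nat) (om : cform) : cform :=
  fun a b => fcomp bd om a b - (-1) ^+ d * fcomp om bd a b.

Definition dform (om : cform) : cform :=
  fun a b => \sum_(d < maxdim.+1) dhom d (hom_comp d om) a b.

Definition form_inner (u v : cform) : R :=
  \sum_(s : M) (weight M s)^-1 * chain_inner (form_at u s) (form_at v s).

Definition is_adjoint_of_d (dstar : cform -> cform) : Prop :=
  (forall v, in_Omega v -> in_Omega (dstar v)) /\
  (forall u v, in_Omega u -> in_Omega v ->
     form_inner (dform u) v = form_inner u (dstar v)).

Definition laplacian (dstar : cform -> cform) (om : cform) : cform :=
  fun a b => dform (dstar om) a b + dstar (dform om) a b.

(* functions = 0-forms: f(s) = f_s s *)
Definition fun_form (f : M -> R) : cform :=
  fun a b => if a == b then f a else 0.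

(* the function underlying a 0-cform h: h(s) is the coefficient of s in h(s) *)
Definition form_fun (h : cform) : M -> R := fun s => h s s.

Definition integral (h : M -> R) : R := \sum_(s : M) h s.

End Defs.

From HB Require Import structures.
From mathcomp Require Import all_boot all_order all_algebra.
From mathcomp Require Import reals.
From mathcomp Require Import zify ring.
From Stdlib Require Import FunctionalExtensionality.
Set Implicit Arguments. Unset Strict Implicit. Unset Printing Implicit Defensive.
Import Order.TTheory GRing.Theory Num.Theory.
Local Open Scope ring_scope.

(* The integral of a 0-form h is the trace of h, i.e. <1, h> for the constant
   function 1.  The differential of any form has zero diagonal, since d changes
   the dimension by one, so the integral of d(d^* f) vanishes; and the integral
   of d^*(d f) is <1, d^* d f> = <d 1, d f> = 0 because d 1 = 0.  The argument
   works for every form in Omega^*(M), not only for functions. *)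

Section CellForms.
Variables (R : realType) (M : cell_complex R).

Lemma hom_compS_fun_form (f : M -> R) d (a b : M) :
  hom_comp d.+1 (fun_form f) a b = 0.
Proof.
rewrite /hom_comp /fun_form; case: ifP => // /eqP Hd.
by case: eqP => // ab; subst b; lia.
Qed.

Lemma dform_fun_form (f : M -> R) (a b : M) :
  dform (fun_form f) a b = inc M a b * (f a - f b).
Proof.
rewrite /dform big_ord_recl big1 ?addr0; last first.
  move=> i _; rewrite /dhom /fcomp !big1 ?mulr0 ?subr0 // => c _;
  by rewrite hom_compS_fun_form ?mul0r ?mulr0.
rewrite /dhom /fcomp /bd expr0 mul1r (bigD1 a) //= big1 ?addr0; last first.
  move=> c; rewrite eq_sym => /negPf ca.
  by rewrite /hom_comp /fun_form ca; case: ifP; rewrite mul0r.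
rewrite (bigD1 b) //= [\sum_(c | c != b) _]big1 ?addr0; last first.
  move=> c /negPf cb.
  by rewrite /hom_comp /fun_form cb; case: ifP; rewrite mulr0.
rewrite /hom_comp /fun_form !addn0 !eqxx; ring.
Qed.

Section Regular.
Hypothesis HM : regular_cell_complex M.

Lemma face_refl (s : M) : face M s s.
Proof. by case: HM. Qed.

Lemma face_trans (r s t : M) : face M r s -> face M s t -> face M r t.
Proof. by case: HM => _ [_ [trans _]]; apply: trans. Qed.

Lemma face_cdim_lt (s t : M) : face M t s -> t != s -> (cdim M t < cdim M s)%N.
Proof. by case: HM => _ [_ [_ [lt _]]]; apply: lt. Qed.

Lemma inc_neq0 (s t : M) :
  (inc M s t != 0) = face M t s && ((cdim M t).+1 == cdim M s)%N.
Proof. by case: HM => _ [_ [_ [_ [inc0 _]]]]. Qed.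

Lemma inc_face (s t : M) : inc M s t != 0 -> face M t s.
Proof. by rewrite inc_neq0 => /andP[]. Qed.

Lemma hom_comp_face (om : cform M) d (a b : M) :
  in_Omega om -> hom_comp d om a b != 0 -> face M b a.
Proof. by case=> om_d _ /om_d /andP[]. Qed.

Lemma inc_eq0 (s t : M) : (cdim M s <= cdim M t)%N -> inc M s t = 0.
Proof.
by move=> st; apply/eqP; rewrite -[_ == 0]negbK inc_neq0;
  apply/negP => /andP[_ /eqP]; lia.
Qed.

Lemma dform_diag (om : cform M) (a : M) : dform om a a = 0.
Proof.
rewrite /dform big1 // => d _.
rewrite /dhom /fcomp /bd !big1 ?mulr0 ?subr0 // => c _; rewrite /hom_comp;
  by case: ifP => [/eqP Hd|]; rewrite ?mul0r ?mulr0 // inc_eq0 ?mulr0 ?mul0r //; lia.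
Qed.

Lemma in_Omega_faces (G : cform M) :
  (forall a b, G a b != 0 -> face M b a) -> in_Omega G.
Proof.
move=> G_face; split.
  move=> d a b; rewrite /hom_comp.
  by case: ifP => [Hd /G_face -> //|]; rewrite eqxx.
apply: functional_extensionality => a; apply: functional_extensionality => b.
have [z|nz] := eqVneq (G a b) 0.
  by rewrite z big1 // => i _; rewrite /hom_comp z; case: ifP.
have ba : (cdim M b <= cdim M a)%N.
  have [-> //|ne] := eqVneq b a.
  exact/ltnW/face_cdim_lt/ne/G_face.
have a_max : (cdim M a <= maxdim M)%N by apply: leq_bigmax.
have codim : (cdim M a - cdim M b < (maxdim M).+1)%N by lia.
rewrite (bigD1 (Ordinal codim)) //= big1 ?addr0.
  by rewrite /hom_comp /=; case: ifP => // /eqP; lia.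
move=> i ne; rewrite /hom_comp; case: ifP => // /eqP Hd.
by move/eqP: ne; case; apply: val_inj => /=; lia.
Qed.

Lemma in_Omega_fun_form (f : M -> R) : in_Omega (fun_form f).
Proof.
apply: in_Omega_faces => a b; rewrite /fun_form.
by case: (eqVneq a b) => [->|]; rewrite ?face_refl ?eqxx.
Qed.

(* d om is a combination of the cells hit by om followed by a boundary, or by
   a boundary followed by om: in both cases a face of a face of [a]. *)
Lemma in_Omega_dform (om : cform M) : in_Omega om -> in_Omega (dform om).
Proof.
move=> om_Omega; apply: in_Omega_faces => a b; apply: contraNT => not_face.
apply/eqP; rewrite /dform big1 // => d _.
rewrite /dhom /fcomp /bd !big1 ?mulr0 ?subr0 // => c _.
- have [->|inc_nz] := eqVneq (inc M a c) 0; first by rewrite mul0r.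
  have [->|hom_nz] := eqVneq (hom_comp d om c b) 0; first by rewrite mulr0.
  have := face_trans (hom_comp_face om_Omega hom_nz) (inc_face inc_nz).
  by rewrite (negPf not_face).
- have [->|hom_nz] := eqVneq (hom_comp d om a c) 0; first by rewrite mul0r.
  have [->|inc_nz] := eqVneq (inc M c b) 0; first by rewrite mulr0.
  have := face_trans (inc_face inc_nz) (hom_comp_face om_Omega hom_nz).
  by rewrite (negPf not_face).
Qed.

Lemma integral_dform (om : cform M) : integral (form_fun (dform om)) = 0.
Proof. by rewrite /integral big1 // => s _; apply: dform_diag. Qed.

Hypothesis Hw : positive_weights M.

Lemma form_inner_fun_form1 (v : cform M) :
  form_inner (fun_form (fun=> 1)) v = integral (form_fun v).
Proof.
apply: eq_bigr => s _; rewrite /chain_inner /form_at (bigD1 s) //= big1.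
  by rewrite /fun_form eqxx addr0 mul1r mulrC -mulrA mulfV ?mulr1 ?lt0r_neq0.
by move=> t; rewrite eq_sym => /negPf st; rewrite /fun_form st !mul0r.
Qed.

Variable dstar : cform M -> cform M.
Hypothesis Hdstar : is_adjoint_of_d dstar.

Lemma integral_adjoint_d (v : cform M) :
  in_Omega v -> integral (form_fun (dstar v)) = 0.
Proof.
move=> v_Omega; rewrite -form_inner_fun_form1 -(proj2 Hdstar) //.
  rewrite /form_inner big1 // => s _; rewrite /chain_inner big1 ?mulr0 // => t _.
  by rewrite /form_at dform_fun_form subrr !mulr0 !mul0r.
exact: in_Omega_fun_form.
Qed.

Lemma integral_laplacian (om : cform M) :
  in_Omega om -> integral (form_fun (laplacian dstar om)) = 0.
Proof.
move=> om_Omega; rewrite [LHS]big_split /= -!/(integral _).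
rewrite integral_dform add0r.
exact: integral_adjoint_d (in_Omega_dform om_Omega).
Qed.

End Regular.
End CellForms.

Theorem corollary3p6 (R : realType) (M : cell_complex R)
  (HM : regular_cell_complex M) (Hw : positive_weights M)
  (dstar : cform M -> cform M) (Hdstar : is_adjoint_of_d dstar)
  (f : M -> R) :
  integral (form_fun (laplacian dstar (fun_form f))) = 0.
Proof. exact: integral_laplacian (in_Omega_fun_form HM f). Qed.
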